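(* Let $p$ be an odd prime, $q=p^m$, $q=et+1$ with integers $e\geq 2,t\geq 1$, $R_{e,q}=\mathbb{F}_q[u]/\langle u^e-1\rangle$ with orthogonal idempotents $\mu_1,\dots,\mu_e$ (see context), and assume $\gcd(n,q)=1$. Let $\mathcal{C}=\bigoplus_{i=1}^e\mu_i\mathcal{C}_i$ be a cyclic code of length $n$ over $R_{e,q}$, where $\mathcal{C}_i=\langle g_i(x)\rangle$ is a cyclic code of length $n$ over $\mathbb{F}_q$ with $g_i(x)$ a monic divisor of $x^n-1$, for $1\leq i\leq e$. Then $\mathcal{C}$ is an LCD code if and only if $g_i(x)$ is a self-reciprocal polynomial over $\mathbb{F}_q$ for every $1\leq i\leq e$.
   Context: Write $u^e-1=\prod_{i=1}^e(u-\alpha_i)$ over $\mathbb{F}_q$, $G_i=u-\alpha_i$, $\widehat{G}_i=(u^e-1)/G_i$, $z_iG_i+h_i\widehat{G}_i=1$, $\mu_i=h_i\widehat{G}_i$; these are pairwise orthogonal idempotents summing to $1$. For a linear code $\mathcal{C}\subseteq R_{e,q}^n$, $\mathcal{C}_i=\{s_i\in\mathbb{F}_q^n:\exists\, s_j\ (j\neq i)\text{ with }\sum_{j}s_j\mu_j\in\mathcal{C}\}$ and $\mathcal{C}=\bigoplus_i\mu_i\mathcal{C}_i$. A code is LCD if $\mathcal{C}\cap\mathcal{C}^\perp=\{0\}$ (Euclidean dual). A polynomial $g$ is self-reciprocal if $x^{\deg g}g(1/x)$ equals $g$ up to a nonzero scalar. *)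

From HB Require Import structures.
From mathcomp Require Import all_boot all_order all_algebra.
Set Implicit Arguments. Unset Strict Implicit. Unset Printing Implicit Defensive.
Import GRing.Theory.
Local Open Scope ring_scope.

Definition Rring (F : finFieldType) (e : nat) := {poly %/ ('X^e - 1 : {poly F})}.

Definition Gi (F : finFieldType) (e : nat) (alpha : 'I_e -> F) (i : 'I_e) : {poly F} :=
  'X - (alpha i)%:P.
Definition Ghat (F : finFieldType) (e : nat) (alpha : 'I_e -> F) (i : 'I_e) : {poly F} :=
  ('X^e - 1) %/ Gi alpha i.

Definition mu (F : finFieldType) (e : nat) (alpha : 'I_e -> F) (h : 'I_e -> {poly F})
  (i : 'I_e) : Rring F e := in_qpoly _ (h i * Ghat alpha i).

Definition cyclic_code (F : finFieldType) (n : nat) (g : {poly F}) : 'rV[F]_n -> Prop :=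
  fun s => exists a : {poly F}, rVpoly s = (a * g) %% ('X^n - 1).

Definition code_R (F : finFieldType) (e n : nat) (alpha : 'I_e -> F)
  (h : 'I_e -> {poly F}) (Ci : 'I_e -> 'rV[F]_n -> Prop) : 'rV[Rring F e]_n -> Prop :=
  fun x => exists s : 'I_e -> 'rV[F]_n, (forall i, Ci i (s i)) /\
     x = \sum_(i < e) (mu alpha h i) *: map_mx (fun c : F => c%:A : Rring F e) (s i).

Definition dotR (Rg : comNzRingType) (n : nat) (x y : 'rV[Rg]_n) : Rg :=
  \sum_(k < n) x 0 k * y 0 k.
Definition dual_code (Rg : comNzRingType) (n : nat) (C : 'rV[Rg]_n -> Prop) :
  'rV[Rg]_n -> Prop := fun y => forall x, C x -> dotR x y = 0.

Definition is_LCD (Rg : comNzRingType) (n : nat) (C : 'rV[Rg]_n -> Prop) : Prop :=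
  forall y, (C y /\ dual_code C y) <-> y = 0.

Definition reciprocal (F : fieldType) (g : {poly F}) : {poly F} :=
  \poly_(i < size g) g`_((size g).-1 - i).
Definition self_reciprocal (F : fieldType) (g : {poly F}) : Prop :=
  exists c : F, c != 0 /\ reciprocal g = c *: g.

(* Evaluation at the e distinct roots alpha_i of u^e - 1 identifies R_{e,q} with
   F_q^e; the idempotent mu_j evaluates to the Kronecker delta at alpha_i, so
   C = (+)_i mu_i C_i is sent componentwise onto C_1 x ... x C_e, and the
   Euclidean form of R_{e,q}^n onto the product of the Euclidean forms of F_q^n.
   Hence C is LCD iff every C_i is. For a cyclic code <g> of length n over F_q,
   with h = (x^n - 1)/g, the dual code is <h*> where h* is the reciprocal of h,
   because the inner product of two words c, c' is the coefficient of x^(n-1)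
   in c(x) times the reversal of c'(x), modulo x^n - 1. Thus <g> is LCD iff no
   nonzero polynomial of degree < n is divisible by both g and h*, i.e. iff g
   and h* are coprime. As n is a unit, x^n - 1 is separable and
   h*.g* = -(x^n - 1) = -h.g with g, h coprime; so g is coprime to h* exactly
   when g divides, hence is associate to, its reciprocal g*. *)

From HB Require Import structures.
From mathcomp Require Import all_boot all_order all_algebra.
From mathcomp Require Import finfield cyclotomic separable.
From mathcomp Require Import zify.
Set Implicit Arguments. Unset Strict Implicit. Unset Printing Implicit Defensive.
Import GRing.Theory.
Local Open Scope ring_scope.

Section Reversal.
Variable R : comNzRingType.
Implicit Types P Q : {poly R}.

Definition revp (d : nat) P : {poly R} := \poly_(j < d.+1) P`_(d - j).

Lemma coef_revp d P j : (revp d P)`_j = if (j <= d)%N then P`_(d - j) else 0.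
Proof. by rewrite coef_poly ltnS. Qed.

Lemma size_revp d P : (size (revp d P) <= d.+1)%N.
Proof. exact: size_poly. Qed.

Lemma revpK d P : (size P <= d.+1)%N -> revp d (revp d P) = P.
Proof.
move=> sP; apply/polyP=> j; rewrite !coef_revp.
case: leqP => [jd|dj]; first by rewrite leq_subr subKn.
by rewrite nth_default // (leq_trans sP).
Qed.

Lemma revpD d : {morph revp d : P Q / P + Q}.
Proof.
by move=> P Q; apply/polyP=> j; rewrite coefD !coef_revp coefD; case: ifP; rewrite ?addr0.
Qed.

Lemma revp0 d : revp d 0 = 0.
Proof. by apply/polyP=> j; rewrite coef_revp !coef0 if_same. Qed.

Lemma revpZ d c P : revp d (c *: P) = c *: revp d P.
Proof. by apply/polyP=> j; rewrite coefZ !coef_revp coefZ; case: ifP; rewrite ?mulr0. Qed.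

Lemma revpN d P : revp d (- P) = - revp d P.
Proof. by rewrite -scaleN1r revpZ scaleN1r. Qed.

Lemma revp_sum d I (r : seq I) (Pr : pred I) (G : I -> {poly R}) :
  revp d (\sum_(i <- r | Pr i) G i) = \sum_(i <- r | Pr i) revp d (G i).
Proof. exact: (big_morph _ (revpD d) (revp0 d)). Qed.

Lemma revpXn d m : (m <= d)%N -> revp d 'X^m = 'X^(d - m).
Proof.
move=> md; apply/polyP=> j; rewrite coef_revp !coefXn.
case: leqP => jd; first by congr _%:R; apply/eqP/eqP; lia.
by case: eqP => // jdm; lia.
Qed.

Lemma poly_sum_coefXn d P :
  (size P <= d.+1)%N -> P = \sum_(i < d.+1) P`_i *: 'X^i.
Proof.
move=> sP; rewrite -poly_def; apply/polyP=> j; rewrite coef_poly.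
by case: ltnP => // dj; rewrite nth_default // (leq_trans sP).
Qed.

Lemma revp_sum_coefXn d P :
  (size P <= d.+1)%N -> revp d P = \sum_(i < d.+1) P`_i *: 'X^(d - i).
Proof.
move=> sP; rewrite {1}(poly_sum_coefXn sP) revp_sum; apply: eq_bigr => i _.
by rewrite revpZ revpXn // -ltnS.
Qed.

Lemma size_mul_leq_addS a b P Q : (size P <= a.+1)%N -> (size Q <= b.+1)%N ->
  (size (P * Q)%R <= (a + b).+1)%N.
Proof.
move=> sP sQ; apply: (leq_trans (size_polyMleq P Q)).
by rewrite -subn1 leq_subLR add1n -addnS -addSn leq_add.
Qed.

Lemma revpM a b P Q : (size P <= a.+1)%N -> (size Q <= b.+1)%N ->
  revp (a + b) (P * Q) = revp a P * revp b Q.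
Proof.
move=> sP sQ; rewrite (revp_sum_coefXn sP) (revp_sum_coefXn sQ).
rewrite {1}(poly_sum_coefXn sP) {1}(poly_sum_coefXn sQ) !mulr_suml revp_sum.
apply: eq_bigr => i _; rewrite !mulr_sumr revp_sum; apply: eq_bigr => j _.
have [ia jb] := (ltn_ord i, ltn_ord j).
rewrite -!scalerAl -!scalerAr !scalerA -!exprD revpZ revpXn; last by lia.
by congr (_ *: 'X^_); lia.
Qed.

Lemma revp_Xn_sub1 n : revp n ('X^n - 1) = - ('X^n - 1).
Proof.
rewrite revpD revpN -(expr0 'X) !revpXn //.
by rewrite subnn subn0 opprB addrC.
Qed.

End Reversal.

Lemma dotR_rVpoly (R : comNzRingType) n (x y : 'rV[R]_n.+1) :
  dotR x y = (rVpoly x * revp n (rVpoly y))`_n.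
Proof.
rewrite coefM; apply: eq_bigr => j _.
by rewrite coef_rVpoly_ord coef_revp leq_subr subKn -1?ltnS // coef_rVpoly_ord.
Qed.

Section Reciprocal.
Variable F : fieldType.
Implicit Types p q d Y : {poly F}.

Lemma reciprocalE p : reciprocal p = revp (size p).-1 p.
Proof.
apply/polyP=> j; rewrite coef_revp coef_poly.
have [->|p0] := eqVneq p 0; first by rewrite !coef0 !if_same.
by move: (size_poly_gt0 p); rewrite p0; case: (size p).
Qed.

Lemma reciprocal0 : reciprocal (0 : {poly F}) = 0.
Proof. by rewrite /reciprocal size_poly0 poly_def big_ord0. Qed.

Lemma reciprocalM p q : reciprocal (p * q) = reciprocal p * reciprocal q.
Proof.
have [->|p0] := eqVneq p 0; first by rewrite mul0r reciprocal0 mul0r.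
have [->|q0] := eqVneq q 0; first by rewrite mulr0 reciprocal0 mulr0.
have [sp sq] : (0 < size p /\ 0 < size q)%N by rewrite !size_poly_gt0.
rewrite !reciprocalE -revpM ?prednK //; congr revp.
rewrite size_mul //; case: (size p) sp => // a _; case: (size q) sq => // b _.
by rewrite addSn addnS.
Qed.

Lemma size_reciprocal p : p`_0 != 0 -> size (reciprocal p) = size p.
Proof. by move=> p00; apply: size_poly_eq; rewrite subnn. Qed.

Lemma reciprocal_Xn_sub1 n : reciprocal ('X^(n.+1) - 1 : {poly F}) = - ('X^(n.+1) - 1).
Proof. by rewrite reciprocalE size_Xn_sub_1 // revp_Xn_sub1. Qed.

Lemma dvdp_revp d Y k m : size d = k.+1 -> (size Y <= m.+1)%N ->
  d %| Y -> revp k d %| revp m Y.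
Proof.
move=> sd sY /dvdpP[b Y_bd]; have [b0|b0] := eqVneq b 0.
  by rewrite Y_bd b0 mul0r revp0 dvdp0.
have d0 : d != 0 by rewrite -size_poly_eq0 sd.
move: sY; rewrite Y_bd size_mul // sd => sbd.
have sb : (0 < size b)%N by rewrite size_poly_gt0.
have -> : m = (m - k + k)%N by move: sb sbd; set s := size b; lia.
by rewrite revpM ?sd //; [apply: dvdp_mull | move: sbd; set s := size b; lia].
Qed.

Lemma dvdp_revp_reciprocal d Y m : d`_0 != 0 -> (size Y <= m.+1)%N ->
  (d %| revp m Y) = (reciprocal d %| Y).
Proof.
move=> d00 sY; have d0 : d != 0 by apply: contra_neq d00 => ->; rewrite coef0.
have sd : size d = (size d).-1.+1 by rewrite prednK ?size_poly_gt0.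
apply/idP/idP => dvd.
  by rewrite -(revpK sY) reciprocalE; apply: dvdp_revp => //; apply: size_revp.
have <- : revp (size d).-1 (reciprocal d) = d by rewrite reciprocalE revpK -?sd.
by apply: dvdp_revp; rewrite ?size_reciprocal.
Qed.

Lemma not_coprimep_common_multiple p q : p != 0 -> q != 0 -> ~~ coprimep p q ->
  exists2 P, P != 0 & [/\ p %| P, q %| P & (size P < size (p * q)%R)%N].
Proof.
move=> p0 q0 ncop; set d := gcdp p q.
have d0 : d != 0 by rewrite gcdp_eq0 negb_and p0.
have qd0 : q %/ d != 0 by rewrite divpN0 // dvdp_leq // dvdp_gcdr.
exists (p * (q %/ d)); first by rewrite mulf_neq0.
split; first exact: dvdp_mulr.
  by rewrite -{1}(divpK (dvdp_gcdl p q)) mulrAC -mulrA divpK ?dvdp_gcdr // dvdp_mull.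
rewrite -{2}(divpK (dvdp_gcdr p q)) -/d mulrA [in X in (_ < X)%N]size_mul ?mulf_neq0 //.
have : (1 < size d)%N.
  by move: ncop; rewrite coprimep_def -/d ltn_neqAle eq_sym size_poly_gt0 d0 andbT.
by case: (size d) => [|[|k]] // _; rewrite !addnS ltnS leq_addr.
Qed.

End Reciprocal.

Lemma dual_code0 (R : comNzRingType) n (C : 'rV[R]_n -> Prop) : dual_code C 0.
Proof. by move=> x _; rewrite /dotR big1 // => k _; rewrite mxE mulr0. Qed.

Lemma is_LCDP (R : comNzRingType) n (C : 'rV[R]_n -> Prop) : C 0 ->
  is_LCD C <-> (forall y, C y -> dual_code C y -> y = 0).
Proof.
move=> C0; split=> [LCD y Cy Dy | LCD y]; first by apply/LCD.
by split=> [[]|->]; [apply: LCD | split; last exact: dual_code0].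
Qed.

Lemma cyclic_code0 (F : finFieldType) n (g : {poly F}) : @cyclic_code F n g 0.
Proof. by exists 0; rewrite linear0 mul0r mod0p. Qed.

Section CyclicCode.
Variables (F : finFieldType) (n : nat) (g : {poly F}).
Local Notation N := ('X^(n.+1) - 1 : {poly F}).
Local Notation C := (@cyclic_code F n.+1 g).
Hypothesis g_dvd : g %| N.
Implicit Types P : {poly F}.

Lemma Xn_sub1_neq0 : N != 0.
Proof. by rewrite -size_poly_eq0 size_Xn_sub_1. Qed.

Lemma size_modp_Xn_sub1 P : (size (P %% N)%R <= n.+1)%N.
Proof. by rewrite -ltnS -(size_Xn_sub_1 F (ltn0Sn n)) ltn_modp Xn_sub1_neq0. Qed.

Lemma coef_modp_Xn_sub1 P : (size P <= (n + n).+1)%N -> (P %% N)`_n = P`_n.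
Proof.
move=> sP; rewrite {2}(divp_eq P N) coefD mulrBr mulr1 coefB coefMXn ltnSn sub0r.
suff sq : (size (P %/ N)%R <= n)%N by rewrite (nth_default _ sq) oppr0 add0r.
rewrite size_divp ?Xn_sub1_neq0 // size_Xn_sub_1 //=; move: sP; set s := size P; lia.
Qed.

Lemma dotR_modp (x y : 'rV[F]_n.+1) :
  dotR x y = ((rVpoly x * revp n (rVpoly y)) %% N)`_n.
Proof.
rewrite dotR_rVpoly coef_modp_Xn_sub1 //.
by apply: size_mul_leq_addS; [apply: size_poly | apply: size_revp].
Qed.

Lemma cyclic_codeP y : C y <-> g %| rVpoly y.
Proof.
split=> [[a ->]|/dvdpP[a ya]]; first by rewrite -(dvdp_mod _ g_dvd) dvdp_mull.
exists a; rewrite -ya modp_small // size_Xn_sub_1 // ltnS; exact: size_poly.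
Qed.

Lemma Xn_sub1_dvdp_coef P : (forall a, ((a * P) %% N)`_n = 0) -> N %| P.
Proof.
move=> Pa; apply/modp_eq0P/polyP => j; rewrite coef0.
have sR := size_modp_Xn_sub1 P.
have [jn|nj] := leqP j n; last by rewrite nth_default // (leq_trans sR).
(* [a = 'X^(n - j)] moves the [j]-th coefficient of [P %% N] to position [n]. *)
have := Pa 'X^(n - j); rewrite -modp_mul coef_modp_Xn_sub1.
  by rewrite coefXnM ltnNge leq_subr subKn.
apply: leq_trans (size_mul_leq_addS (a := n - j) _ sR) _; first by rewrite size_polyXn.
by rewrite ltnS leq_add2r leq_subr.
Qed.

Lemma dual_cyclic_code_dvdP y : dual_code C y <-> N %| g * revp n (rVpoly y).
Proof.
set Q := revp n (rVpoly y).
have dotC a x : rVpoly x = (a * g) %% N -> dotR x y = ((a * (g * Q)) %% N)`_n.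
  by move=> xa; rewrite dotR_modp xa mulrC modp_mul -/Q mulrCA [Q * g]mulrC.
split=> [Dy | NgQ x [a /dotC ->]]; last by rewrite (modp_eq0P _ _ (dvdp_mull a NgQ)) coef0.
apply: Xn_sub1_dvdp_coef => a.
have xa : rVpoly (poly_rV ((a * g) %% N) : 'rV_n.+1) = (a * g) %% N.
  by rewrite poly_rV_K // size_modp_Xn_sub1.
by rewrite -(dotC a _ xa); apply: Dy; exists a.
Qed.

Lemma dvdp_Xn_sub1_coef0 d : d %| N -> d`_0 != 0.
Proof.
case/dvdpP=> q Nq; have := coef0M q d; rewrite -Nq coefB coefXn coef1 sub0r.
rewrite eqxx => N0; apply/eqP=> d0; move: N0; rewrite d0 mulr0.
by move/eqP; rewrite oppr_eq0 oner_eq0.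
Qed.

Local Notation h := (N %/ g).

Lemma mul_check_gen : h * g = N.
Proof. exact: divpK. Qed.

Lemma gen_neq0 : g != 0.
Proof. by apply: contraTneq g_dvd => ->; rewrite dvd0p Xn_sub1_neq0. Qed.

Lemma check_dvd : h %| N.
Proof. by rewrite -[X in _ %| X]mul_check_gen dvdp_mulr. Qed.

Lemma check_neq0 : h != 0.
Proof. by apply: contraTneq check_dvd => ->; rewrite dvd0p Xn_sub1_neq0. Qed.

Lemma size_reciprocal_check : size (reciprocal h) = size h.
Proof. exact/size_reciprocal/dvdp_Xn_sub1_coef0/check_dvd. Qed.

Lemma dual_cyclic_codeP y : dual_code C y <-> reciprocal h %| rVpoly y.
Proof.
rewrite dual_cyclic_code_dvdP -{1}mul_check_gen [g * _]mulrC dvdp_mul2r ?gen_neq0 //.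
by rewrite dvdp_revp_reciprocal ?size_poly ?dvdp_Xn_sub1_coef0 ?check_dvd.
Qed.

Lemma cyclic_code_LCD_coprimeP : is_LCD C <-> coprimep g (reciprocal h).
Proof.
have rh0 : reciprocal h != 0.
  by rewrite -size_poly_eq0 size_reciprocal_check size_poly_eq0 check_neq0.
have size_g_rh : size (g * reciprocal h) = n.+2.
  rewrite size_mul ?gen_neq0 // size_reciprocal_check addnC.
  by rewrite -size_mul ?check_neq0 ?gen_neq0 // mul_check_gen size_Xn_sub_1.
rewrite is_LCDP; last exact: cyclic_code0.
split=> [LCD | cop y /cyclic_codeP gy /dual_cyclic_codeP ry].
  apply: contraT => /(not_coprimep_common_multiple gen_neq0 rh0)[P P0 [gP rP]].
  rewrite size_g_rh ltnS => sP.
  have yP : rVpoly (poly_rV P : 'rV_n.+1) = P by rewrite poly_rV_K.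
  have /(congr1 rVpoly) : poly_rV P = 0 :> 'rV_n.+1.
    by apply: LCD; [apply/cyclic_codeP | apply/dual_cyclic_codeP]; rewrite yP.
  by rewrite yP linear0 => /eqP; rewrite (negPf P0).
suff y0 : rVpoly y = 0 by rewrite -[y]rVpolyK y0 linear0.
apply: contraTeq isT => y0.
have gry : g * reciprocal h %| rVpoly y by rewrite Gauss_dvdp // gy ry.
by have := dvdp_leq y0 gry; rewrite size_g_rh ltnNge size_poly.
Qed.

Lemma coprimep_reciprocal_checkP : coprimep g h ->
  coprimep g (reciprocal h) <-> self_reciprocal g.
Proof.
move=> cgh; have g0 := gen_neq0.
have rhg : reciprocal h * reciprocal g = - (h * g).
  by rewrite -reciprocalM mul_check_gen reciprocal_Xn_sub1.
split=> [cop | [c [c0 rg]]].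
  have g_rg : g %| reciprocal g by rewrite -(Gauss_dvdpr _ cop) rhg dvdpNr dvdp_mull.
  have : g %= reciprocal g.
    by rewrite -dvdp_size_eqp // size_reciprocal ?dvdp_Xn_sub1_coef0.
  case/eqpP=> [[c1 c2]] /= /andP[c10 c20] e.
  exists (c2^-1 * c1); split; first by rewrite mulf_neq0 ?invr_eq0.
  by rewrite -scalerA e scalerA mulVf // scale1r.
suff -> : reciprocal h = (- c^-1) *: h by rewrite coprimepZr // oppr_eq0 invr_eq0.
apply: (mulIf g0); rewrite -scalerAl scaleNr -scalerN -rhg rg -scalerAr scalerA.
by rewrite mulVf // scale1r.
Qed.

Lemma cyclic_code_LCD_self_reciprocal : coprimep g h ->
  is_LCD C <-> self_reciprocal g.
Proof. by move=> cgh; rewrite cyclic_code_LCD_coprimeP coprimep_reciprocal_checkP. Qed.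

End CyclicCode.

Section QpolyEval.
Variables (A : comNzRingType) (p : {poly A}) (a : A).
Hypothesis pa : root (mk_monic p) a.

Definition qpoly_eval (r : {poly %/ p}) : A := (r : {poly A}).[a].

Lemma horner_rmodp_mk_monic q : (Pdiv.CommonRing.rmodp q (mk_monic p)).[a] = q.[a].
Proof.
rewrite [in RHS](Pdiv.RingMonic.rdivp_eq (monic_mk_monic p) q) hornerD hornerM.
by rewrite (rootP pa) mulr0 add0r.
Qed.

Lemma qpoly_eval_is_zmod_morphism : zmod_morphism qpoly_eval.
Proof. by move=> r s; rewrite /qpoly_eval /= hornerD hornerN. Qed.

Lemma qpoly_eval_is_monoid_morphism : monoid_morphism qpoly_eval.
Proof.
split=> [|r s]; last by rewrite /qpoly_eval poly_of_qpolyM horner_rmodp_mk_monic hornerM.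
by rewrite /qpoly_eval qpolyCE hornerC.
Qed.

Definition qpoly_eval_rmorphism : {rmorphism {poly %/ p} -> A} :=
  HB.pack qpoly_eval
    (GRing.isZmodMorphism.Build _ _ _ qpoly_eval_is_zmod_morphism)
    (GRing.isMonoidMorphism.Build _ _ _ qpoly_eval_is_monoid_morphism).

Lemma qpoly_eval_in_qpoly q : qpoly_eval_rmorphism (in_qpoly p q) = q.[a].
Proof. exact: horner_rmodp_mk_monic. Qed.

Lemma qpoly_eval_scalar c : qpoly_eval_rmorphism c%:A = c.
Proof. by rewrite /= /qpoly_eval poly_of_qpolyZ hornerZ qpolyCE hornerC mulr1. Qed.

End QpolyEval.

Section IdempotentDecomposition.
Variables (K R : comNzRingType) (e : nat) (emb : K -> R) (mu : 'I_e -> R).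
Variable phi : 'I_e -> {rmorphism R -> K}.
Hypothesis phi_emb : forall i c, phi i (emb c) = c.
Hypothesis phi_mu : forall i j, phi i (mu j) = (i == j)%:R.
Hypothesis phi_inj : forall r, (forall i, phi i r = 0) -> r = 0.
Variable n : nat.
Implicit Types (x y : 'rV[R]_n) (s : 'I_e -> 'rV[K]_n).

Definition idem_sum s : 'rV[R]_n := \sum_(i < e) mu i *: map_mx emb (s i).

Definition idem_code (Ci : 'I_e -> 'rV[K]_n -> Prop) : 'rV[R]_n -> Prop :=
  fun x => exists s, (forall i, Ci i (s i)) /\ x = idem_sum s.

Lemma component_idem_sum s i : map_mx (phi i) (idem_sum s) = s i.
Proof.
apply/matrixP => r k; rewrite !mxE summxE rmorph_sum (bigD1 i) //= big1 ?addr0.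
  by rewrite !mxE rmorphM phi_emb phi_mu eqxx mul1r.
by move=> j ji; rewrite !mxE rmorphM phi_mu eq_sym (negPf ji) mul0r.
Qed.

Lemma idem_sum_component x : idem_sum (fun i => map_mx (phi i) x) = x.
Proof.
apply/matrixP => r k; apply/eqP; rewrite -subr_eq0; apply/eqP/phi_inj => i.
have /matrixP/(_ r k) := component_idem_sum (fun i => map_mx (phi i) x) i.
by rewrite rmorphB !mxE => ->; rewrite subrr.
Qed.

Lemma phi_dotR i x y : phi i (dotR x y) = dotR (map_mx (phi i) x) (map_mx (phi i) y).
Proof. by rewrite rmorph_sum; apply: eq_bigr => k _; rewrite rmorphM !mxE. Qed.

Variable Ci : 'I_e -> 'rV[K]_n -> Prop.
Hypothesis Ci0 : forall i, Ci i 0.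

Lemma idem_codeP x : idem_code Ci x <-> forall i, Ci i (map_mx (phi i) x).
Proof.
split=> [[s [Cs ->]] i | Cx]; first by rewrite component_idem_sum.
by exists (fun i => map_mx (phi i) x); rewrite idem_sum_component.
Qed.

Definition single_family (i : 'I_e) (c : 'rV[K]_n) (j : 'I_e) : 'rV[K]_n :=
  if j == i then c else 0.

Lemma idem_code_single i c : Ci i c -> idem_code Ci (idem_sum (single_family i c)).
Proof.
move=> Cc; apply/idem_codeP => j; rewrite component_idem_sum /single_family.
by case: eqP => [->|_].
Qed.

Lemma dual_idem_codeP y :
  dual_code (idem_code Ci) y <-> forall i, dual_code (Ci i) (map_mx (phi i) y).
Proof.
split=> [Dy i c Cc | Dy x /idem_codeP Cx].
  have /(congr1 (phi i)) := Dy _ (idem_code_single Cc).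
  by rewrite phi_dotR component_idem_sum /single_family eqxx rmorph0.
by apply: phi_inj => i; rewrite phi_dotR; apply: Dy.
Qed.

Lemma idem_code_LCD : is_LCD (idem_code Ci) <-> forall i, is_LCD (Ci i).
Proof.
rewrite is_LCDP; last by apply/idem_codeP => i; rewrite map_mx0.
split=> [LCD i | LCD y /idem_codeP Cy /dual_idem_codeP Dy].
  apply/is_LCDP => // c Cc Dc.
  suff /(congr1 (map_mx (phi i))) : idem_sum (single_family i c) = 0.
    by rewrite component_idem_sum map_mx0 /single_family eqxx.
  apply: LCD; first exact: idem_code_single.
  apply/dual_idem_codeP => j; rewrite component_idem_sum /single_family.
  by case: eqP => [->|_] //; apply: dual_code0.
apply/matrixP => r k; rewrite mxE; apply: phi_inj => i.
have /matrixP/(_ r k) := (LCD i (map_mx (phi i) y)).1 (conj (Cy i) (Dy i)).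
by rewrite !mxE.
Qed.

End IdempotentDecomposition.

Lemma natr_coprime_card_neq0 (F : finFieldType) p m n :
  prime p -> #|F| = (p ^ m)%N -> coprime n (p ^ m) -> n%:R != 0 :> F.
Proof.
move=> p_pr cardF; have m_gt0 : (0 < m)%N.
  by case: m cardF => // cardF; have := card_finNzRing_gt1 F; rewrite cardF.
rewrite coprime_pexpr // coprime_sym prime_coprime //.
by rewrite (dvdn_pcharf (card_finPcharP cardF p_pr)).
Qed.

Lemma cyclic_code_LCD (F : finFieldType) n (g : {poly F}) :
  n%:R != 0 :> F -> g %| 'X^n - 1 -> is_LCD (@cyclic_code F n g) <-> self_reciprocal g.
Proof.
case: n => [|n] nF gN; first by rewrite eqxx in nF.
apply: cyclic_code_LCD_self_reciprocal => //.
by apply: separable_coprime (separable_Xn_sub_1 nF) _; rewrite mulrC divpK.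
Qed.

Section Idempotents.
Variables (F : finFieldType) (e : nat) (alpha : 'I_e -> F) (z h : 'I_e -> {poly F}).
Local Notation Xe1 := ('X^e - 1 : {poly F}).
Hypothesis Xe1_split : Xe1 = \prod_(i < e) Gi alpha i.
Hypothesis Gi_bezout : forall i, z i * Gi alpha i + h i * Ghat alpha i = 1.

Lemma exponent_gt0 : (0 < e)%N.
Proof.
case: e alpha Xe1_split => // a; rewrite big_ord0 expr0 subrr.
by move/eqP; rewrite eq_sym oner_eq0.
Qed.

Lemma mk_monic_Xe1 : mk_monic Xe1 = Xe1.
Proof.
have e_gt0 := exponent_gt0.
by rewrite /mk_monic size_Xn_sub_1 // ltnS e_gt0 monic_Xn_sub_1.
Qed.

Lemma root_alpha i : root (mk_monic Xe1) (alpha i).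
Proof.
by rewrite mk_monic_Xe1 Xe1_split rootE horner_prod (bigD1 i) //= hornerXsubC subrr mul0r.
Qed.

Lemma horner_Ghat i j :
  (Ghat alpha j).[alpha i] = \prod_(k < e | k != j) (alpha i - alpha k).
Proof.
rewrite /Ghat Xe1_split (bigD1 j) //= mulKp ?polyXsubC_eq0 // horner_prod.
by apply: eq_bigr => k _; rewrite hornerXsubC.
Qed.

Lemma horner_idempotent i j : (h j * Ghat alpha j).[alpha i] = (i == j)%:R.
Proof.
have [<-|ij] := eqVneq i j.
  have /(congr1 (horner^~ (alpha i))) := Gi_bezout i.
  by rewrite hornerD !hornerM hornerXsubC subrr mulr0 add0r hornerC.
by rewrite hornerM horner_Ghat (bigD1 i) //= subrr mul0r mulr0.
Qed.

Lemma alpha_inj : injective alpha.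
Proof.
move=> i j aij; apply/eqP.
have := horner_idempotent i j; rewrite aij horner_idempotent eqxx.
by case: eqP => // _ /eqP; rewrite oner_eq0.
Qed.

Local Notation phi i := (qpoly_eval_rmorphism (root_alpha i)).

Lemma phi_mu i j : phi i (mu alpha h j) = (i == j)%:R.
Proof. by rewrite qpoly_eval_in_qpoly horner_idempotent. Qed.

Lemma phi_inj r : (forall i, phi i r = 0) -> r = 0.
Proof.
move=> r0; apply: val_inj => /=; apply: contraTeq isT => nz.
have := max_poly_roots nz (rs := [seq alpha i | i <- enum 'I_e]).
rewrite size_map size_enum_ord map_inj_uniq ?enum_uniq; last exact: alpha_inj.
have -> : all (root (val r)) [seq alpha i | i <- enum 'I_e].
  by apply/allP => _ /mapP[i _ ->]; apply/eqP/r0.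
have sr : (size r < e.+1)%N.
  by rewrite (leq_trans (size_mk_monic r)) // mk_monic_Xe1 size_Xn_sub_1 ?exponent_gt0.
by move/(_ isT isT); rewrite ltnNge -ltnS sr.
Qed.

End Idempotents.

Theorem corollary4p6 (F : finFieldType) (p m e t n : nat)
  (alpha : 'I_e -> F) (z h : 'I_e -> {poly F}) (g : 'I_e -> {poly F}) :
  prime p -> odd p -> #|F| = (p ^ m)%N ->
  (2 <= e)%N -> (1 <= t)%N -> (p ^ m = e * t + 1)%N ->
  coprime n (p ^ m) ->
  ('X^e - 1 : {poly F}) = \prod_(i < e) Gi alpha i ->
  (forall i, z i * Gi alpha i + h i * Ghat alpha i = 1) ->
  (forall i, g i \is monic /\ g i %| 'X^n - 1) ->
  (is_LCD (code_R alpha h (fun i => @cyclic_code F n (g i)))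
   <-> forall i, self_reciprocal (g i)).
Proof.
move=> p_pr _ cardF _ _ _ n_coprime Xe1_split Gi_bezout g_gen.
have nF := natr_coprime_card_neq0 p_pr cardF n_coprime.
(* [code_R alpha h] unfolds to [idem_code (fun c => c%:A) (mu alpha h)]. *)
rewrite (idem_code_LCD _ (phi_mu Xe1_split Gi_bezout) (phi_inj Gi_bezout)); last 2 first.
- by move=> i c; apply: qpoly_eval_scalar.
- by move=> i; apply: cyclic_code0.
by split=> LCD i; apply/(cyclic_code_LCD nF (g_gen i).2)/LCD.
Qed.
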